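(* In a $\$$-bounded contract, for all $\mathcal{A}\subseteq\mathbb{A}$ (possibly infinite), all mempools $\mathcal{P}\subseteq\mathbb{X}$ and all states $s$, there exists a finite $\mathcal{A}_0\subseteq\mathcal{A}$ such that for every $\mathcal{B}$ with $\mathcal{A}_0\subseteq\mathcal{B}\subseteq\mathcal{A}$, $\mathrm{MEV}_{\mathcal{A}_0}(s,\mathcal{P})=\mathrm{MEV}_{\mathcal{B}}(s,\mathcal{P})$.
   Context: Fix a countably infinite set $\mathbb{A}$ of actors, a set $\mathbb{T}$ of token types and a set $\mathbb{X}$ of transactions. A wallet is a function $\mathbb{T}\to\mathbb{N}$; $\mathbb{W}_{\mathrm{fin}}$ is the set of finite-support wallets. A wallet state is $W:\mathbb{A}\to(\mathbb{T}\to\mathbb{N})$ satisfying the finite tokens axiom $\sum_{\tau}\sum_{a\in\mathbb{A}}W(a)(\tau)\in\mathbb{N}$. A contract consists of blockchain states $\mathbb{S}=\mathbb{C}\times\mathbb{W}$ (contract state, wallet state), a partial transition function $\mapsto:(\mathbb{S}\times\mathbb{X})\rightharpoonup\mathbb{S}$ and initial states $\mathbb{S}_0$. A transaction $x$ is valid in $s$ if $s\xmapsto{x}s'$ for some $s'$. For finite sequences, $s\xrightarrow{\varepsilon}s$, and $s\xrightarrow{\vec{Y}x}s'$ iff either $s\xrightarrow{\vec{Y}}s''\xmapsto{x}s'$, or $s\xrightarrow{\vec{Y}}s'$ and $x$ is not valid in $s'$. States are assumed reachable from $\mathbb{S}_0$. $W_{\mathcal{A}}(s)=\sum_{a\in\mathcal{A}}W(s)(a)$.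 A wealth function is an additive map $\$:\mathbb{W}_{\mathrm{fin}}\to\mathbb{N}$; $\$_{\mathcal{A}}(s)=\$(W_{\mathcal{A}}(s))$; the gain is $G_{\mathcal{A}}(s,\vec{X})=\$_{\mathcal{A}}(s')-\$_{\mathcal{A}}(s)$ where $s\xrightarrow{\vec X}s'$. The contract is $\$$-bounded if for every $s_0\in\mathbb{S}_0$ there is $n$ such that $\$_{\mathbb{A}}(s)<n$ for all $s$ reachable from $s_0$. A transaction deducibility function $\kappa:\mathcal{P}(\mathbb{A})\times\mathcal{P}(\mathbb{X})\to\mathcal{P}(\mathbb{X})$, $(\mathcal{A},\mathcal{X})\mapsto\kappa_{\mathcal{A}}(\mathcal{X})$, satisfies: extensivity $\mathcal{X}\subseteq\kappa_{\mathcal{A}}(\mathcal{X})$; idempotence $\kappa_{\mathcal{A}}(\kappa_{\mathcal{A}}(\mathcal{X}))=\kappa_{\mathcal{A}}(\mathcal{X})$; monotonicity in both arguments; continuity $\kappa_{\mathcal{A}}(\bigcup_i\mathcal{X}_i)=\bigcup_i\kappa_{\mathcal{A}}(\mathcal{X}_i)$ for increasing chains; finite causes (every finite $\mathcal{X}_0$ is contained in $\kappa_{\mathcal{A}_0}(\emptyset)$ for some finite $\mathcal{A}_0$); private knowledge ($\kappa_{\mathcal{A}}(\emptyset)\subseteq\kappa_{\mathcal{A}'}(\emptyset)$ implies $\mathcal{A}\subseteq\mathcal{A}'$); no shared secrets ($\kappa_{\mathcal{A}}(\mathcal{X})\cap\kappa_{\mathcal{B}}(\mathcal{X})\subseteq\kappa_{\mathcal{A}\cap\mathcal{B}}(\mathcal{X})$).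 $\mathcal{X}^*$ denotes finite sequences over $\mathcal{X}$. The unrealized gain is $\mathrm{uG}_{\mathcal{A}}(s)=\max\{G_{\mathcal{A}}(s,\vec{Y}):\vec{Y}\in\kappa_{\mathcal{A}}(\emptyset)^*\}$; the external gain is $\mathrm{xG}_{\mathcal{A}}(s,\vec{Y})=G_{\mathcal{A}}(s,\vec{Y})-\mathrm{uG}_{\mathcal{A}}(s)$; $\mathrm{MEV}_{\mathcal{A}}(s,\mathcal{P})=\max\{\mathrm{xG}_{\mathcal{A}}(s,\vec{Y}):\vec{Y}\in\kappa_{\mathcal{A}}(\mathcal{P})^*\}$. *)

From HB Require Import structures.
From mathcomp Require Import all_boot all_order all_algebra.
From mathcomp Require Import boolp classical_sets functions cardinality fsbigop.

Set Implicit Arguments.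
Unset Strict Implicit.
Unset Printing Implicit Defensive.
Import Order.TTheory GRing.Theory Num.Theory.
Local Open Scope classical_set_scope.

Definition wallet (T : Type) := T -> nat.

Definition wfin (T : Type) (w : wallet T) : Prop :=
  finite_set [set t | w t <> 0%N].

(* Finite tokens axiom: sum_tau sum_a W(a)(tau) is a natural number,
   i.e. only finitely many (a, tau) have W(a)(tau) <> 0. *)
Definition finite_tokens (Act T : Type) (W : Act -> wallet T) : Prop :=
  finite_set [set p : Act * T | W p.1 p.2 <> 0%N].

Definition wstate (Act T : Type) := {W : Act -> wallet T | finite_tokens W}.

Definition bstate (Act T C : Type) := (C * wstate Act T)%type.

Definition Wof (Act T C : Type) (s : bstate Act T C) : Act -> wallet T :=
  proj1_sig s.2.

Definition WA (Act : choiceType) (T C : Type) (A : set Act)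
  (s : bstate Act T C) : wallet T :=
  fun t => (\sum_(a \in A) Wof s a t)%R.

(* an additive map $ : W_fin -> nat (values outside W_fin are irrelevant) *)
Definition additive_wealth (T : Type) (wealth : wallet T -> nat) : Prop :=
  forall w1 w2 : wallet T, wfin w1 -> wfin w2 ->
    wealth (fun t => (w1 t + w2 t)%N) = (wealth w1 + wealth w2)%N.

Definition wealthA (Act : choiceType) (T C : Type) (wealth : wallet T -> nat)
  (A : set Act) (s : bstate Act T C) : nat := wealth (WA A s).

(* step s x = Some s' iff s |-x-> s'; None iff x is not valid in s. *)
Definition transition (Act T C X : Type) :=
  bstate Act T C -> X -> option (bstate Act T C).

(* s -[Ys]-> s' : invalid transactions are skipped *)
Definition exec (Act T C X : Type) (step : transition Act T C X)
  (s : bstate Act T C) (Ys : seq X) : bstate Act T C :=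
  foldl (fun s' x => odflt s' (step s' x)) s Ys.

Definition reachable (Act T C X : Type) (step : transition Act T C X)
  (S0 : set (bstate Act T C)) (s : bstate Act T C) : Prop :=
  exists s0, S0 s0 /\ exists Ys : seq X, exec step s0 Ys = s.

Definition wealth_bounded (Act : choiceType) (T C X : Type)
  (wealth : wallet T -> nat) (step : transition Act T C X)
  (S0 : set (bstate Act T C)) : Prop :=
  forall s0, S0 s0 -> exists n : nat, forall Ys : seq X,
    (wealthA wealth setT (exec step s0 Ys) < n)%N.

Record deducibility (Act X : Type) (kappa : set Act -> set X -> set X)
  : Prop := Deducibility {
  ded_extensive : forall A Xs, Xs `<=` kappa A Xs;
  ded_idempotent : forall A Xs, kappa A (kappa A Xs) = kappa A Xs;
  ded_monotone : forall A A' Xs Xs', A `<=` A' -> Xs `<=` Xs' ->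
      kappa A Xs `<=` kappa A' Xs';
  ded_continuous : forall A (Xi : nat -> set X),
      (forall i, Xi i `<=` Xi i.+1) ->
      kappa A (\bigcup_i Xi i) = \bigcup_i kappa A (Xi i);
  ded_finite_causes : forall X0 : set X, finite_set X0 ->
      exists A0 : set Act, finite_set A0 /\ X0 `<=` kappa A0 set0;
  ded_private_knowledge : forall A A',
      kappa A set0 `<=` kappa A' set0 -> A `<=` A';
  ded_no_shared_secrets : forall A B Xs,
      kappa A Xs `&` kappa B Xs `<=` kappa (A `&` B) Xs }.

(* the maximum of a set of integers (0 if it has no maximum; in a
   $-bounded contract all the maxima used below exist) *)
Definition maxZ (S : set int) : int :=
  match pselect (exists m : int, S m /\ (forall x, S x -> (x <= m)%R)) with
  | left h => proj1_sig (cid h)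
  | right _ => 0%R
  end.

Definition seq_in (X : Type) (Xs : set X) (Ys : seq X) : Prop :=
  foldr (fun y acc => Xs y /\ acc) True Ys.

Definition gain (Act : choiceType) (T C X : Type) (wealth : wallet T -> nat)
  (step : transition Act T C X) (A : set Act) (s : bstate Act T C)
  (Ys : seq X) : int :=
  ((wealthA wealth A (exec step s Ys))%:Z - (wealthA wealth A s)%:Z)%R.

Definition uG (Act : choiceType) (T C X : Type) (wealth : wallet T -> nat)
  (step : transition Act T C X) (kappa : set Act -> set X -> set X)
  (A : set Act) (s : bstate Act T C) : int :=
  maxZ [set g | exists Ys, seq_in (kappa A set0) Ys /\ g = gain wealth step A s Ys].

Definition xG (Act : choiceType) (T C X : Type) (wealth : wallet T -> nat)
  (step : transition Act T C X) (kappa : set Act -> set X -> set X)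
  (A : set Act) (s : bstate Act T C) (Ys : seq X) : int :=
  (gain wealth step A s Ys - uG wealth step kappa A s)%R.

Definition MEV (Act : choiceType) (T C X : Type) (wealth : wallet T -> nat)
  (step : transition Act T C X) (kappa : set Act -> set X -> set X)
  (A : set Act) (s : bstate Act T C) (P : set X) : int :=
  maxZ [set g | exists Ys, seq_in (kappa A P) Ys /\
                           g = xG wealth step kappa A s Ys].

From mathcomp Require Import all_boot all_order all_algebra.
From mathcomp Require Import boolp classical_sets functions cardinality fsbigop.
From mathcomp Require Import zify.
Set Implicit Arguments.
Unset Strict Implicit.
Unset Printing Implicit Defensive.
Import Order.TTheory GRing.Theory Num.Theory.
Local Open Scope classical_set_scope.

(* Fix a (possibly infinite) coalition A.  We show that every B with
   A0 <= B <= A has the same MEV as A itself, for a suitable finite A0 <= A;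
   applying this to B and to A0 gives the theorem.  The ingredients are:
   - wealth: $_B(s) <= $_A(s) for B <= A, with equality as soon as B contains
     every member of A holding tokens in s (finitely many, by the finite
     tokens axiom);
   - deducibility: a finite sequence over kappa_A(Q) already lies over
     kappa_F(Q) for some finite F <= A (finite causes + no shared secrets);
   - maxima: in a $-bounded contract the best sequences Y2 over kappa_A(0)
     and Y1 over kappa_A(P) exist; then uG and MEV of B are computed by the
     same witnesses as for A, provided B contains the finite causes of Y1, Y2
     and the token holders of A in s, s-[Y1]->, s-[Y2]->.
   A0 collects exactly these finitely many actors. *)

Lemma fsum_split (I : choiceType) (f : I -> nat) (B B' : set I) :
  finite_set [set i | f i <> 0%N] -> B `<=` B' ->
  (\sum_(i \in B') f i = \sum_(i \in B) f i + \sum_(i \in B' `\` B) f i)%R.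
Proof.
move=> fin BB'.
rewrite [LHS]fsbig_supp [in RHS]fsbig_supp [X in (_ + X)%R]fsbig_supp.
have -> : B' `&` f @^-1` [set~ 0%R] =
  (B `&` f @^-1` [set~ 0%R]) `|` ((B' `\` B) `&` f @^-1` [set~ 0%R]).
  rewrite -setIUl; congr (_ `&` _); apply/seteqP; split => i /=.
    by move=> B'i; case: (pselect (B i)) => h; [left|right].
  by case=> [/BB'|[]].
rewrite fsbigU //; try exact: finite_setIr.
by move=> i [[Bi _] [[_ nBi] _]].
Qed.

Section Wallets.
Variables (Act : choiceType) (T C : Type).
Implicit Types (s : bstate Act T C) (A B : set Act).

Definition holders s : set Act := [set a | exists t, Wof s a t <> 0%N].

Lemma finite_tokens_of s : finite_set [set p : Act * T | Wof s p.1 p.2 <> 0%N].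
Proof. exact: (proj2_sig s.2). Qed.

Lemma finite_holders s : finite_set (holders s).
Proof.
apply: (sub_finite_set _ (finite_image fst (finite_tokens_of s))).
by move=> a [t ht]; exists (a, t).
Qed.

Lemma finite_holders_of_token s t : finite_set [set a | Wof s a t <> 0%N].
Proof.
apply: (sub_finite_set _ (finite_image fst (finite_tokens_of s))).
by move=> a /= h; exists (a, t).
Qed.

Lemma wfin_WA B s : wfin (WA B s).
Proof.
apply: (sub_finite_set _ (finite_image snd (finite_tokens_of s))).
move=> t /= h; apply: contrapT => nh; apply: h; rewrite /WA fsbig1 //.
by move=> a _; apply: contrapT => ne; apply: nh; exists (a, t).
Qed.

Lemma WA_split (B B' : set Act) s : B `<=` B' ->
  WA B' s = fun t => (WA B s t + WA (B' `\` B) s t)%N.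
Proof.
by move=> BB'; apply: funext => t; rewrite /WA (fsum_split _ BB') //;
  exact: finite_holders_of_token.
Qed.

Lemma wealthA_holders (wealth : wallet T -> nat) A B s :
  A `&` holders s `<=` B -> B `<=` A ->
  wealthA wealth B s = wealthA wealth A s.
Proof.
move=> AHB BA; rewrite /wealthA (WA_split s BA); congr wealth.
apply: funext => t; rewrite [WA (A `\` B) s t]fsbig1 ?addn0 //.
move=> a [Aa nBa]; apply: contrapT => ne; apply: nBa; apply: AHB.
by split => //; exists t.
Qed.

Lemma wealthA_mono (wealth : wallet T -> nat) (B B' : set Act) s :
  additive_wealth wealth -> B `<=` B' ->
  (wealthA wealth B s <= wealthA wealth B' s)%N.
Proof.
move=> hw BB'; rewrite /wealthA (WA_split s BB') hw ?leq_addr //;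
  exact: wfin_WA.
Qed.

End Wallets.

Lemma exec_cat (Act : choiceType) (T C X : Type) (step : transition Act T C X)
  (s : bstate Act T C) (Y1 Y2 : seq X) :
  exec step s (Y1 ++ Y2) = exec step (exec step s Y1) Y2.
Proof. by rewrite /exec foldl_cat. Qed.

Lemma reachable_wealth_bound (Act : choiceType) (T C X : Type)
  (wealth : wallet T -> nat) (step : transition Act T C X)
  (S0 : set (bstate Act T C)) (s : bstate Act T C) :
  additive_wealth wealth -> wealth_bounded wealth step S0 ->
  reachable step S0 s ->
  exists n, forall (B : set Act) (Y : seq X),
    (wealthA wealth B (exec step s Y) < n)%N.
Proof.
move=> hw hb [s0 [S0s0 [Ys0 <-]]]; have [n hn] := hb s0 S0s0.
exists n => B Y; rewrite -exec_cat; apply: leq_ltn_trans (hn (Ys0 ++ Y)).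
exact: wealthA_mono (subsetT B).
Qed.

Lemma seq_in_mono (X : Type) (Xs Xs' : set X) (Y : seq X) :
  Xs `<=` Xs' -> seq_in Xs Y -> seq_in Xs' Y.
Proof. by move=> sub; elim: Y => //= y Y IH [/sub ? /IH]. Qed.

Lemma seq_in_finite_cause (Act : choiceType) (X : Type)
  (kappa : set Act -> set X -> set X) (A : set Act) (Q : set X) (Y : seq X) :
  deducibility kappa -> seq_in (kappa A Q) Y ->
  exists F, [/\ finite_set F, F `<=` A & seq_in (kappa F Q) Y].
Proof.
move=> hk; elim: Y => [_|y Y IH /= [Ay /IH [F [Ffin FA FY]]]].
  by exists set0; split => //; exact: finite_set0.
have [F0 [F0fin F0y]] := ded_finite_causes hk (finite_set1 y).
have {}F0y : kappa F0 Q y :=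
  ded_monotone hk (@subset_refl _ F0) (sub0set Q) (F0y y erefl).
have AF0y : kappa (A `&` F0) Q y by apply: (ded_no_shared_secrets hk).
exists (F `|` (A `&` F0)); split.
- by rewrite finite_setU; split => //; exact: finite_setIr.
- by move=> a [/FA|[]].
split; first by apply: (ded_monotone hk _ (@subset_refl _ Q) AF0y) => a; right.
by apply: seq_in_mono FY; apply: (ded_monotone hk _ (@subset_refl _ Q)) => a; left.
Qed.

Lemma maxZ_eq (S : set int) (m : int) :
  S m -> (forall x, S x -> (x <= m)%R) -> maxZ S = m.
Proof.
move=> Sm Hm; rewrite /maxZ; case: pselect => [h|[]]; last by exists m.
case: cid => m' [Sm' Hm'] /=; apply/eqP; rewrite eq_le.
by rewrite Hm // Hm'.
Qed.

Lemma maxZ_dominated (I : Type) (QB QA : I -> Prop) (gB gA : I -> int)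
  (Y : I) :
  QB Y -> gB Y = gA Y -> (forall Z, QA Z -> (gA Z <= gA Y)%R) ->
  (forall Z, QB Z -> QA Z) -> (forall Z, QB Z -> (gB Z <= gA Z)%R) ->
  maxZ [set g | exists Z, QB Z /\ g = gB Z] = gA Y.
Proof.
move=> QBY eY hA hsub hle; apply: maxZ_eq; first by exists Y.
by move=> x [Z [QZ ->]]; apply: le_trans (hle _ QZ) (hA _ (hsub _ QZ)).
Qed.

(* A bounded nat-valued objective attains its maximum on any nonempty family:
   otherwise it would take arbitrarily large values on the family. *)
Lemma bounded_maximizer (I : Type) (Qs : I -> Prop) (f : I -> nat)
  (Y0 : I) (n : nat) :
  Qs Y0 -> (forall Y, Qs Y -> (f Y < n)%N) ->
  exists2 Y, Qs Y & forall Z, Qs Z -> (f Z <= f Y)%N.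
Proof.
move=> Q0 hb; apply: contrapT => nomax.
have above : forall j, exists2 Y, Qs Y & (j <= f Y)%N.
  elim=> [|j [Y QY jY]]; first by exists Y0.
  have /existsNP [Z /not_implyP [QZ /negP]] :
    ~ (forall Z, Qs Z -> (f Z <= f Y)%N) by move=> h; apply: nomax; exists Y.
  by rewrite -ltnNge => YZ; exists Z => //; apply: leq_ltn_trans YZ.
by have [Y QY] := above n; rewrite leqNgt hb.
Qed.

Section Optima.
Variables (Act : choiceType) (T C X : Type).
Variables (wealth : wallet T -> nat) (step : transition Act T C X).
Variable (kappa : set Act -> set X -> set X).
Hypothesis hwealth : additive_wealth wealth.
Hypothesis hkappa : deducibility kappa.
Variables (A : set Act) (P : set X) (s : bstate Act T C).

Let gainA := gain wealth step A s.

Definition optimal_for (Q : set X) (Y : seq X) : Prop :=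
  seq_in Q Y /\ forall Z, seq_in Q Z -> (gainA Z <= gainA Y)%R.

Lemma uG_optimal (Y2 : seq X) : optimal_for (kappa A set0) Y2 ->
  uG wealth step kappa A s = gainA Y2.
Proof.
by move=> [inY2 maxY2]; apply: (maxZ_dominated (QA := seq_in (kappa A set0))).
Qed.

Section Subcoalition.
Variable B : set Act.
Hypothesis BA : B `<=` A.
Hypothesis wealth_s : wealthA wealth B s = wealthA wealth A s.

Let gainB := gain wealth step B s.

Lemma gain_sub_coalition (Z : seq X) : (gainB Z <= gainA Z)%R.
Proof.
rewrite /gainB /gainA /gain wealth_s.
by have := wealthA_mono (exec step s Z) hwealth BA; lia.
Qed.

Lemma uG_sub_coalition (Y2 : seq X) :
  optimal_for (kappa A set0) Y2 -> seq_in (kappa B set0) Y2 ->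
  wealthA wealth B (exec step s Y2) = wealthA wealth A (exec step s Y2) ->
  uG wealth step kappa B s = gainA Y2.
Proof.
move=> [_ M2] B2 w2.
apply: (maxZ_dominated (QA := seq_in (kappa A set0)) (gA := gainA)) => //.
- by rewrite /gainA /gain -w2 -wealth_s.
- by move=> Z; apply: seq_in_mono; apply: ded_monotone.
- by move=> Z _; exact: gain_sub_coalition.
Qed.

(* MEV of B equals MEV of A: both are xG(Y1) for the optimum Y1 of A over
   kappa_A(P), as soon as B can deduce Y1 and Y2 and has the same wealth as A
   after each of them. *)
Lemma MEV_sub_coalition (Y1 Y2 : seq X) :
  optimal_for (kappa A P) Y1 -> seq_in (kappa B P) Y1 ->
  wealthA wealth B (exec step s Y1) = wealthA wealth A (exec step s Y1) ->
  optimal_for (kappa A set0) Y2 -> seq_in (kappa B set0) Y2 ->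
  wealthA wealth B (exec step s Y2) = wealthA wealth A (exec step s Y2) ->
  MEV wealth step kappa B s P = MEV wealth step kappa A s P.
Proof.
move=> [inY1 maxY1] B1 w1 opt2 B2 w2.
have uGA := uG_optimal opt2; have uGB := uG_sub_coalition opt2 B2 w2.
have xG_le : forall Z, seq_in (kappa A P) Z ->
    (xG wealth step kappa A s Z <= xG wealth step kappa A s Y1)%R.
  by move=> Z hZ; rewrite /xG lerB // maxY1.
have deducible_in_A : forall Z, seq_in (kappa B P) Z -> seq_in (kappa A P) Z.
  by move=> Z; apply: seq_in_mono; apply: ded_monotone.
rewrite /MEV (maxZ_dominated (QA := seq_in (kappa A P)) _ _ xG_le) //.
- by rewrite (maxZ_dominated (QA := seq_in (kappa A P)) _ _ xG_le).
- by rewrite /xG uGA uGB /gain -w1 -wealth_s.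
- by move=> Z _; rewrite /xG uGA uGB lerB //; exact: gain_sub_coalition.
Qed.

End Subcoalition.

Lemma MEV_stabilizes (Y1 Y2 : seq X) :
  optimal_for (kappa A P) Y1 -> optimal_for (kappa A set0) Y2 ->
  exists A0 : set Act, [/\ finite_set A0, A0 `<=` A &
    forall B, A0 `<=` B -> B `<=` A ->
      MEV wealth step kappa B s P = MEV wealth step kappa A s P].
Proof.
move=> opt1 opt2.
have [F1 [F1fin F1A F1Y1]] := seq_in_finite_cause hkappa opt1.1.
have [F2 [F2fin F2A F2Y2]] := seq_in_finite_cause hkappa opt2.1.
pose H := holders s `|` holders (exec step s Y1) `|` holders (exec step s Y2).
have A0fin : finite_set ((A `&` H) `|` (F1 `|` F2)).
  rewrite !finite_setU; split; last by split.
  by apply: finite_setIr; rewrite !finite_setU; split; first split;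
    exact: finite_holders.
exists ((A `&` H) `|` (F1 `|` F2)); split => //.
- by move=> a [[]|[/F1A|/F2A]].
move=> B A0B BA.
have same_wealth s' : holders s' `<=` H ->
    wealthA wealth B s' = wealthA wealth A s'.
  move=> sH; apply: wealthA_holders BA => a [Aa Ha].
  by apply: A0B; left; split => //; exact: sH.
have deducible F Q Y : F `<=` B -> seq_in (kappa F Q) Y -> seq_in (kappa B Q) Y.
  by move=> FB; apply: seq_in_mono; apply: (ded_monotone hkappa FB).
apply: (MEV_sub_coalition BA _ opt1 _ _ opt2).
- by apply: same_wealth => a ?; left; left.
- by apply: deducible F1Y1 => a ?; apply: A0B; right; left.
- by apply: same_wealth => a ?; left; right.
- by apply: deducible F2Y2 => a ?; apply: A0B; right; right.
- by apply: same_wealth => a ?; right.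
Qed.

Lemma optimal_exists (Q : set X) (n : nat) :
  (forall Y, (wealthA wealth A (exec step s Y) < n)%N) ->
  exists Y, optimal_for Q Y.
Proof.
move=> bound.
have [//|Y QY maxY] :=
  bounded_maximizer (Qs := seq_in Q) (Y0 := [::]) _ (fun Y _ => bound Y).
by exists Y; split => // Z /maxY; rewrite /gainA /gain; lia.
Qed.

End Optima.

Theorem mainTheorem13
  (Act : choiceType) (T C X : Type)
  (hAct : exists f : nat -> Act, bijective f)
  (wealth : wallet T -> nat) (hwealth : additive_wealth wealth)
  (kappa : set Act -> set X -> set X) (hkappa : deducibility kappa)
  (step : transition Act T C X) (S0 : set (bstate Act T C))
  (hbounded : wealth_bounded wealth step S0)
  (A : set Act) (P : set X) (s : bstate Act T C)
  (hs : reachable step S0 s) :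
  exists A0 : set Act, [/\ finite_set A0, A0 `<=` A &
    forall B : set Act, A0 `<=` B -> B `<=` A ->
      MEV wealth step kappa A0 s P = MEV wealth step kappa B s P].
Proof.
have [n bound] := reachable_wealth_bound hwealth hbounded hs.
have [Y1 opt1] := optimal_exists (kappa A P) (bound A).
have [Y2 opt2] := optimal_exists (kappa A set0) (bound A).
have [A0 [A0fin A0A stable]] := MEV_stabilizes hwealth hkappa opt1 opt2.
exists A0; split => // B A0B BA.
by rewrite stable // stable.
Qed.
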